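(* Let $d=5$, let $0<\epsilon<\frac35$, and define $\mu(X)=w(|X|)$ for $X\in Q_5$, where $w(0)=\frac1{16}(1-\epsilon)+\frac38\epsilon$, $w(2)=\frac1{16}(1-\epsilon)$, $w(4)=\frac1{16}(1-\epsilon)+\frac18\epsilon$, and $w(1)=w(3)=w(5)=0$. Then $\mu$ is a probability distribution with $w_i^0=\frac12$ for all $i\in[5]$, and $\mu$ has no equilibrium: for every $X\in Q_5$ there is $Y\in Q_5$ with $P_1(X,Y)<\frac12$.
   Context: $Q_d=\{0,1\}^d$ with the Hamming distance $d(X,Y)=|\{i: x_i\neq y_i\}|$; $|X|$ is the number of coordinates equal to $1$. For a probability distribution $\mu$ on $Q_d$ (extended additively to subsets), and $A,B\in Q_d$, let $V(A,B)=\{Z: d(Z,A)<d(Z,B)\}$, $T(A,B)=\{Z: d(Z,A)=d(Z,B)\}$, $P_1(A,B)=\mu(V(A,B))+\frac12\mu(T(A,B))$, $P_2(A,B)=\mu(V(B,A))+\frac12\mu(T(A,B))$. $(A,B)$ is an equilibrium if $P_1(A,B)\ge P_1(A',B)$ for all $A'$ and $P_2(A,B)\ge P_2(A,B')$ for all $B'$. $w_i^0=\mu(\{Z: z_i=0\})$. *)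

From mathcomp Require Import all_boot all_order all_algebra.
Set Implicit Arguments. Unset Strict Implicit. Unset Printing Implicit Defensive.
Import Order.TTheory GRing.Theory Num.Theory.
Local Open Scope ring_scope.

(* The hypercube Q_d = {0,1}^d, coordinates indexed by 'I_d (true = 1). *)
Definition Q (d : nat) := {ffun 'I_d -> bool}.

Definition hdist d (X Y : Q d) : nat := #|[set i | X i != Y i]|.
Definition hweight d (X : Q d) : nat := #|[set i | X i]|.

Section Game.
Variables (R : realFieldType) (d : nat).
Implicit Types (mu : Q d -> R) (A B : Q d).

Definition muS mu (S : pred (Q d)) : R := \sum_(Z : Q d | S Z) mu Z.

Definition is_prob mu : Prop := (forall X, 0 <= mu X) /\ \sum_(X : Q d) mu X = 1.

Definition Vor A B : pred (Q d) := fun Z => (hdist Z A < hdist Z B)%N.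
Definition Tie A B : pred (Q d) := fun Z => hdist Z A == hdist Z B.

Definition P1 mu A B : R := muS mu (Vor A B) + muS mu (Tie A B) / 2.
Definition P2 mu A B : R := muS mu (Vor B A) + muS mu (Tie A B) / 2.

Definition equilibrium mu A B : Prop :=
  (forall A', P1 mu A' B <= P1 mu A B) /\ (forall B', P2 mu A B' <= P2 mu A B).

Definition w0 mu (i : 'I_d) : R := muS mu (fun Z => ~~ Z i).
End Game.

Definition w5 (R : realFieldType) (eps : R) (k : nat) : R :=
  match k with
  | 0 => (1 - eps) / 16 + 3 * eps / 8
  | 2 => (1 - eps) / 16
  | 4 => (1 - eps) / 16 + eps / 8
  | _ => 0
  end.

Definition mu5 (R : realFieldType) (eps : R) (X : Q 5) : R := w5 eps (hweight X).

From mathcomp Require Import all_boot all_order all_algebra.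
From mathcomp Require Import ring lra.
Set Implicit Arguments. Unset Strict Implicit. Unset Printing Implicit Defensive.
Import Order.TTheory GRing.Theory Num.Theory.

(* The game is constant-sum (P1 + P2 = 1) and a player who copies the opponent gets exactly
   1/2, so an equilibrium (A, B) would force P1(A, Y) >= 1/2 for every Y; it is therefore
   enough to give, for each X, a deviation Y with P1(X, Y) < 1/2.  Writing n_k for the number
   of points of weight k won by X against Y (ties counted as one half), P1(X, Y) equals
   (n0 + n2 + n4 + eps (5 n0 + n4 - n2)) / 16, an affine function of eps, so the bound on the
   whole interval (0, 3/5) follows from its values at the endpoints; a suitable Y is found by
   computation over all pairs of points of Q_5, encoded as bit lists. *)

Section ConstantSum.
Variables (R : realFieldType) (d : nat) (mu : Q d -> R).
Hypothesis mu_prob : is_prob mu.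

Local Open Scope ring_scope.

Lemma P1_diag B : P1 mu B B = 1 / 2.
Proof.
have [_ mu1] := mu_prob; rewrite /P1 /muS big_pred0 => [|Z]; last by rewrite /Vor ltnn.
by rewrite (eq_bigl predT) => [|Z]; rewrite /Tie ?eqxx ?mu1 ?add0r.
Qed.

Lemma P1_add_P2 A B : P1 mu A B + P2 mu A B = 1.
Proof.
have [_ <-] := mu_prob; rewrite /P1 /P2 /muS.
rewrite addrACA -splitr.
rewrite !(big_mkcond (Vor _ _)) (big_mkcond (Tie _ _)) -!big_split /=.
by apply: eq_bigr => Z _; rewrite /Vor /Tie; case: ltngtP; rewrite ?addr0 ?add0r.
Qed.

Lemma no_equilibrium_of_deviation :
  (forall X, exists Y, P1 mu X Y < 1 / 2) -> ~ exists A B, equilibrium mu A B.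
Proof.
move=> dev [A [B [bestA bestB]]]; have [Y ltY] := dev A.
have := bestA B; have := bestB Y; rewrite P1_diag.
have := P1_add_P2 A B; have := P1_add_P2 A Y; lra.
Qed.

End ConstantSum.

Fixpoint bitstrings (n : nat) : seq (seq bool) :=
  if n is n'.+1 then
    [seq false :: s | s <- bitstrings n'] ++ [seq true :: s | s <- bitstrings n']
  else [:: [::]].

Lemma mem_map_cons (T : eqType) (b c : T) s l :
  (b :: s \in [seq c :: t | t <- l]) = (b == c) && (s \in l).
Proof.
by apply/mapP/andP => [[t tl [-> ->]] | [/eqP-> sl]]; [rewrite eqxx | exists s].
Qed.

Lemma mem_bitstrings n s : (s \in bitstrings n) = (size s == n).
Proof.
elim: n s => [|n IHn] [|b s] //=; rewrite mem_cat.
  by apply/norP; split; apply/mapP => -[].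
by case: b; rewrite !mem_map_cons IHn ?orbF.
Qed.

Lemma uniq_bitstrings n : uniq (bitstrings n).
Proof.
have cons_inj (b : bool) : injective (cons b) by move=> s t [].
elim: n => //= n IHn; rewrite cat_uniq !map_inj_uniq // IHn andbT /=.
by apply/hasPn => _ /mapP[s _ ->]; rewrite mem_map_cons.
Qed.

Definition of_bits n (s : seq bool) : Q n := [ffun i : 'I_n => nth false s i].

Definition to_bits n (X : Q n) : seq bool := [seq X i | i <- enum 'I_n].

Lemma to_bitsK n : cancel (@to_bits n) (@of_bits n).
Proof.
move=> X; apply/ffunP => i.
by rewrite ffunE (nth_map i) ?size_enum_ord // nth_ord_enum.
Qed.

Lemma to_bits_in_bitstrings n (X : Q n) : to_bits X \in bitstrings n.
Proof. by rewrite mem_bitstrings size_map size_enum_ord. Qed.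

Lemma of_bits_inj n : {in bitstrings n &, injective (@of_bits n)}.
Proof.
move=> s t; rewrite !mem_bitstrings => /eqP s_n /eqP t_n st.
apply: (@eq_from_nth _ false) => [|i]; first by rewrite s_n t_n.
by rewrite s_n => i_n; have := congr1 (fun X : Q n => X (Ordinal i_n)) st; rewrite !ffunE.
Qed.

Lemma sum_Q_bitstrings (M : nmodType) n (F : Q n -> M) :
  (\sum_(X : Q n) F X = \sum_(s <- bitstrings n) F (of_bits n s))%R.
Proof.
rewrite -(big_map (@of_bits n) predT F); apply: perm_big.
apply: uniq_perm; rewrite ?index_enum_uniq //.
  by rewrite (map_inj_in_uniq (@of_bits_inj n)) uniq_bitstrings.
by move=> X; rewrite mem_index_enum -(to_bitsK X) map_f ?to_bits_in_bitstrings.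
Qed.

Lemma card_set_ord_iota n (P : pred nat) : #|[set i : 'I_n | P i]| = count P (iota 0 n).
Proof. by rewrite cardsE -val_enum_ord count_map enumT cardE size_filter. Qed.

Definition bits_weight n (s : seq bool) : nat := count (nth false s) (iota 0 n).

Definition bits_dist n (s t : seq bool) : nat :=
  count (fun i => nth false s i != nth false t i) (iota 0 n).

Lemma hweight_of_bits n s : hweight (of_bits n s) = bits_weight n s.
Proof.
by rewrite /hweight /bits_weight -card_set_ord_iota; apply: eq_card => i; rewrite !inE ffunE.
Qed.

Lemma hdist_of_bits n s t : hdist (of_bits n s) (of_bits n t) = bits_dist n s t.
Proof.
by rewrite /hdist /bits_dist -card_set_ord_iota; apply: eq_card => i; rewrite !inE !ffunE.
Qed.

(* Twice the share of [z] won by [x] against [y]. *)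
Definition vote n (x y z : seq bool) : nat :=
  if bits_dist n z x < bits_dist n z y then 2 else bits_dist n z x == bits_dist n z y.

Definition weight_tally (T : Type) (wt f : T -> nat) (l : seq T) : nat * nat * nat :=
  let at_weight k := sumn [seq f x | x <- l & wt x == k] in
  (at_weight 0, at_weight 2, at_weight 4).

(* [w5_mass eps t] below is affine in [eps] with slope [5 n0 + n4 - n2], so it stays below 1
   on (0, 3/5) once it does at the end the slope points away from. *)
Definition deviation_cert (t : nat * nat * nat) : bool :=
  let: (n0, n2, n4) := t in
  ((n0 + n2 + n4 <= 16) && (5 * n0 + n4 < n2))
  || ((n2 < 5 * n0 + n4) && (5 * (n0 + n2 + n4) + 3 * (5 * n0 + n4) <= 80 + 3 * n2)).

Lemma deviation_certs_Q5 :
  all (fun x => has (fun y =>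
         deviation_cert (weight_tally (bits_weight 5) (vote 5 x y) (bitstrings 5)))
       (bitstrings 5)) (bitstrings 5).
Proof. by vm_compute. Qed.

Local Open Scope ring_scope.

Lemma P1_of_bits (R : realFieldType) n (mu : Q n -> R) x y :
  P1 mu (of_bits n x) (of_bits n y) =
  (\sum_(z <- bitstrings n) (vote n x y z)%:R * mu (of_bits n z)) / 2.
Proof.
rewrite /P1 /muS (big_mkcond (Vor _ _)) (big_mkcond (Tie _ _)) !sum_Q_bitstrings.
rewrite [X in _ + X]mulr_suml -big_split mulr_suml; apply: eq_bigr => z _.
rewrite /Vor /Tie /vote !hdist_of_bits.
by case: (ltngtP (bits_dist n z x) (bits_dist n z y)) => _ /=; lra.
Qed.

(* [n0 w(0) + n2 w(2) + n4 w(4)] *)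
Definition w5_mass (R : realFieldType) (eps : R) (t : nat * nat * nat) : R :=
  let: (n0, n2, n4) := t in
  ((n0 + n2 + n4)%N%:R + eps * ((5 * n0 + n4)%N%:R - n2%:R)) / 16.

Lemma sum_w5 (R : realFieldType) (eps : R) (T : Type) (wt f : T -> nat) (l : seq T) :
  \sum_(x <- l) (f x)%:R * w5 eps (wt x) = w5_mass eps (weight_tally wt f l).
Proof.
elim: l => [|x l IHl]; first by rewrite big_nil /=; field.
rewrite big_cons IHl /=; case: (wt x) => [|[|[|[|[|k]]]]] /=;
  by rewrite /w5 ?natrD ?natrM; field.
Qed.

Lemma deviation_cert_lt (R : realFieldType) (eps : R) t :
  0 < eps -> eps < 3 / 5 -> deviation_cert t -> w5_mass eps t < 1.
Proof.
case: t => -[n0 n2] n4 eps_gt0 eps_lt /=.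
set N := (n0 + n2 + n4)%N; set a := (5 * n0 + n4)%N.
case/orP=> /andP[]; rewrite -(ltr_nat R) -(ler_nat R) => h1 h2.
- have : eps * (a%:R - n2%:R) < 0 by rewrite pmulr_rlt0 // subr_lt0.
  lra.
- have : eps * (a%:R - n2%:R) < 3 / 5 * (a%:R - n2%:R) by rewrite ltr_pM2r // subr_gt0.
  move: h2; rewrite !natrD; lra.
Qed.

Section Mu5.
Variables (R : realFieldType) (eps : R).

Lemma sum_mu5 (f : seq bool -> nat) :
  \sum_(z <- bitstrings 5) (f z)%:R * mu5 eps (of_bits 5 z) =
  w5_mass eps (weight_tally (bits_weight 5) f (bitstrings 5)).
Proof. by rewrite -sum_w5; apply: eq_bigr => z _; rewrite /mu5 hweight_of_bits. Qed.

Lemma mu5_prob : 0 <= eps <= 1 -> is_prob (mu5 eps).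
Proof.
move=> /andP[eps_ge0 eps_le1]; split.
  by move=> X; rewrite /mu5 /w5; case: (hweight X) => [|[|[|[|[|k]]]]]; lra.
rewrite sum_Q_bitstrings (eq_bigr (fun z => 1%N%:R * mu5 eps (of_bits 5 z))) ?sum_mu5;
  last by move=> z _; rewrite mul1r.
have -> : weight_tally (bits_weight 5) (fun=> 1%N) (bitstrings 5) = (1, 10, 5)%N by vm_compute.
by rewrite /=; field.
Qed.

Lemma w0_mu5 i : w0 (mu5 eps) i = 1 / 2.
Proof.
rewrite /w0 /muS big_mkcond sum_Q_bitstrings.
rewrite (eq_bigr (fun z => (~~ nth false z i : nat)%:R * mu5 eps (of_bits 5 z))) ?sum_mu5;
  last by move=> z _; rewrite ffunE; case: (nth false z i); rewrite ?mul1r ?mul0r.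
have zeros : all (fun k => weight_tally (bits_weight 5) (fun z => ~~ nth false z k : nat)
                             (bitstrings 5) == (1, 6, 1)%N) (iota 0 5).
  by vm_compute.
move/allP/(_ i): zeros; rewrite mem_iota ltn_ord => /(_ isT) /eqP->.
by rewrite /=; field.
Qed.

Lemma mu5_deviation : 0 < eps -> eps < 3 / 5 ->
  forall X, exists Y, P1 (mu5 eps) X Y < 1 / 2.
Proof.
move=> eps_gt0 eps_lt X; rewrite -(to_bitsK X).
have /hasP[y _ cert] := allP deviation_certs_Q5 _ (to_bits_in_bitstrings X).
exists (of_bits 5 y); rewrite P1_of_bits sum_mu5.
by have := deviation_cert_lt eps_gt0 eps_lt cert; lra.
Qed.

End Mu5.

Theorem mainTheorem9 (R : realFieldType) (eps : R) :
  0 < eps -> eps < 3 / 5 ->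
  [/\ is_prob (mu5 eps),
      (forall i : 'I_5, w0 (mu5 eps) i = 1 / 2),
      ~ (exists A B : Q 5, equilibrium (mu5 eps) A B) &
      (forall X : Q 5, exists Y : Q 5, P1 (mu5 eps) X Y < 1 / 2)].
Proof.
move=> eps_gt0 eps_lt.
have mu_prob : is_prob (mu5 eps) by apply: mu5_prob; apply/andP; split; lra.
have deviation := mu5_deviation eps_gt0 eps_lt.
by split=> //; [apply: w0_mu5 | apply: no_equilibrium_of_deviation].
Qed.
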